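(* Let $(X,Y)\sim H$ with marginal distribution functions $F$ (of $X$) and $G$ (of $Y$). Then $(X,Y)$ is quasi-independent if and only if $$\mathbb P(X\in A,Y\in B)+\mathbb P(X\in B,Y\in A)=\mathbb P(X\in A)\mathbb P(Y\in B)+\mathbb P(X\in B)\mathbb P(Y\in A)$$ for all Borel sets $A,B\subseteq\mathbb R$.
   Context: $(X,Y)$ is quasi-independent if $\frac{H(x,y)+H(y,x)}{2}=\frac12F(x)G(y)+\frac12F(y)G(x)$ for all $x,y\in\mathbb R$, where $H$ is the joint distribution function. *)

From HB Require Import structures.
From mathcomp Require Import all_boot all_order all_algebra.
From mathcomp Require Import all_classical all_reals all_analysis.
Set Implicit Arguments. Unset Strict Implicit. Unset Printing Implicit Defensive.
Import Order.TTheory GRing.Theory Num.Theory.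
Local Open Scope classical_set_scope.
Local Open Scope ring_scope.

Definition joint_cdf (d : measure_display) (T : measurableType d) (R : realType)
  (P : probability T R) (X Y : T -> R) (x y : R) : R :=
  fine (P (X @^-1` `]-oo, x] `&` Y @^-1` `]-oo, y])).

Definition marg_cdf (d : measure_display) (T : measurableType d) (R : realType)
  (P : probability T R) (X : T -> R) (x : R) : R :=
  fine (P (X @^-1` `]-oo, x])).

Definition quasi_independent (d : measure_display) (T : measurableType d)
  (R : realType) (P : probability T R) (X Y : T -> R) : Prop :=
  forall x y : R,
    (joint_cdf P X Y x y + joint_cdf P X Y y x) / 2
    = 2^-1 * marg_cdf P X x * marg_cdf P Y y
      + 2^-1 * marg_cdf P X y * marg_cdf P Y x.

From HB Require Import structures.
From mathcomp Require Import all_boot all_order all_algebra.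
From mathcomp Require Import all_classical all_reals all_analysis.
From mathcomp Require Import lra.
Set Implicit Arguments.
Unset Strict Implicit.
Unset Printing Implicit Defensive.
Import Order.TTheory GRing.Theory Num.Theory.
Local Open Scope classical_set_scope.
Local Open Scope ring_scope.

(* For a fixed Borel set B, both sides of the identity are finite measures in
   A: P(X in A, Y in B) + P(X in B, Y in A) on the left and
   P(Y in B) P(X in A) + P(X in B) P(Y in A) on the right.  Measures that
   agree on a pi-system generating the sigma-algebra, and finite on a
   countable cover taken from it, agree everywhere; so the identity extends
   from left rays to Borel sets in A, and then, by its symmetry in (A, B), in
   B.  On pairs of left rays the identity is quasi-independence of H, F, G. *)

Lemma measurable_fun_preimage d d' (T : measurableType d)
    (T' : measurableType d') (f : T -> T') (A : set T') :
  measurable_fun setT f -> measurable A -> measurable (f @^-1` A).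
Proof. by move=> mf mA; rewrite -[_ @^-1` _]setTI; exact: mf. Qed.

Section event_distribution.
Local Open Scope ereal_scope.
Context d d' (T : measurableType d) (T' : measurableType d') (R : realType).
Variable mu : {measure set T -> \bar R}.

(* The measurability proofs are arguments only so that the measure instance
   below can be inferred from the term. *)
Definition event_distribution (X : T -> T') (mX : measurable_fun setT X)
    (D : set T) (mD : measurable D) : set T' -> \bar R :=
  fun A => mu (X @^-1` A `&` D).

Variables (X : T -> T') (mX : measurable_fun setT X) (D : set T) (mD : measurable D).

Let mpreX A : measurable A -> measurable (X @^-1` A `&` D).
Proof. by move=> mA; apply: measurableI => //; exact: measurable_fun_preimage. Qed.

Let event_distribution0 : event_distribution mX mD set0 = 0.
Proof. by rewrite /event_distribution preimage_set0 set0I measure0. Qed.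

Let event_distribution_ge0 A : 0 <= event_distribution mX mD A.
Proof. exact: measure_ge0. Qed.

Let event_distribution_sigma_additive :
  semi_sigma_additive (event_distribution mX mD).
Proof.
move=> F mF tF mUF; rewrite /event_distribution preimage_bigcup setI_bigcupl.
apply: measure_semi_sigma_additive => [k||].
- exact: mpreX.
- apply: trivIset_setIr => i j _ _ [t [Fi Fj]].
  by apply: tF => //; exists (X t).
- by rewrite -setI_bigcupl -preimage_bigcup; exact: mpreX.
Qed.

HB.instance Definition _ := isMeasure.Build _ _ _ (event_distribution mX mD)
  event_distribution0 event_distribution_ge0 event_distribution_sigma_additive.

End event_distribution.

Section quasi_independent_on.
Local Open Scope ereal_scope.
Context d d' (T : measurableType d) (T' : measurableType d') (R : realType).
Variables (P : probability T R) (X Y : T -> T').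
Hypotheses (mX : measurable_fun setT X) (mY : measurable_fun setT Y).

Definition quasi_independent_on (A B : set T') : Prop :=
  P (X @^-1` A `&` Y @^-1` B) + P (X @^-1` B `&` Y @^-1` A)
  = P (X @^-1` A) * P (Y @^-1` B) + P (X @^-1` B) * P (Y @^-1` A).

Lemma quasi_independent_onC A B :
  quasi_independent_on A B -> quasi_independent_on B A.
Proof. by rewrite /quasi_independent_on addeC => ->; rewrite addeC. Qed.

Variables (G : set (set T')) (g : (set T')^nat).
Hypotheses (mG : measurable = <<s G >>) (setIG : setI_closed G).
Hypotheses (Gg : forall k, G (g k)) (g_cover : \bigcup_k g k = setT).

Let measurable_G {A} : G A -> measurable A.
Proof. by rewrite mG; exact: sub_sigma_algebra. Qed.

Lemma quasi_independent_on_extend B : measurable B ->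
  (forall A, G A -> quasi_independent_on A B) ->
  forall A, measurable A -> quasi_independent_on A B.
Proof.
move=> mB qiGB A mA.
have mXB := measurable_fun_preimage mX mB.
have mYB := measurable_fun_preimage mY mB.
pose cX := NngNum (fine_ge0 (measure_ge0 P (X @^-1` B))).
pose cY := NngNum (fine_ge0 (measure_ge0 P (Y @^-1` B))).
pose lhs := measure_add (event_distribution P mX mYB) (event_distribution P mY mXB).
pose rhs := measure_add (mscale cY (event_distribution P mX measurableT))
                        (mscale cX (event_distribution P mY measurableT)).
have lhsE C : lhs C = P (X @^-1` C `&` Y @^-1` B) + P (X @^-1` B `&` Y @^-1` C).
  by rewrite /lhs measure_addE /event_distribution /= (setIC (Y @^-1` C)).
have rhsE C : rhs C = P (X @^-1` C) * P (Y @^-1` B) + P (X @^-1` B) * P (Y @^-1` C).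
  rewrite /rhs measure_addE /= /mscale /event_distribution /= !setIT.
  by rewrite !fineK ?fin_num_measure // muleC.
have : lhs A = rhs A.
  apply: (measure_unique G g mG setIG Gg g_cover lhs rhs) => [C GC|k|//].
  - by move: (qiGB C GC); rewrite /quasi_independent_on -lhsE -rhsE.
  - suff : lhs (g k) < +oo by [].
    have mgk := measurable_G (Gg k).
    by rewrite lhsE ltey_eq fin_numD !fin_num_measure //;
      apply: measurableI; exact: measurable_fun_preimage.
by rewrite /quasi_independent_on -lhsE -rhsE.
Qed.

Lemma quasi_independent_on_generated :
  (forall A B, G A -> G B -> quasi_independent_on A B) ->
  forall A B, measurable A -> measurable B -> quasi_independent_on A B.
Proof.
move=> qiG A B mA mB.
have qiAG C : G C -> quasi_independent_on A C.
  by move=> GC; apply: quasi_independent_on_extend => // [|C' GC'];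
    [exact: measurable_G | exact: qiG].
by apply: quasi_independent_onC; apply: quasi_independent_on_extend => // C GC;
  apply: quasi_independent_onC; exact: qiAG.
Qed.

End quasi_independent_on.

Section left_rays.
Variable R : realType.

Definition left_rays : set (set R) := [set `]-oo, x]%classic | x in [set: R]].

Lemma measurable_left_rays : @measurable _ R = <<s left_rays >>.
Proof.
rewrite eqEsubset; split; apply: smallest_sub.
- exact: smallest_sigma_algebra.
- move=> _ [[a b] _ <-] /=.
  have ray x : <<s left_rays >> `]-oo, x]%classic.
    by apply: sub_sigma_algebra; exists x.
  have [_ sD sU] := smallest_sigma_algebra setT left_rays.
  have -> : `]a, b]%classic = setT `\` ((setT `\` `]-oo, b]) `|` `]-oo, a]).
    by rewrite !setTD setCU setCK setCitvl set_itv_splitI setIC.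
  apply: (sD); rewrite -bigcup2E; apply: sU => -[|[|k]] /=.
  + exact: sD.
  + exact: ray.
  + exact: sigma_algebra0.
- exact: sigma_algebra_measurable.
- by move=> _ [x _ <-]; exact: measurable_itv.
Qed.

Lemma left_rays_setI_closed : setI_closed left_rays.
Proof.
move=> _ _ [x _ <-] [y _ <-]; exists (Order.min x y) => //.
by apply/seteqP; split => z /=; rewrite !in_itv /= le_min => /andP.
Qed.

Lemma bigcup_left_rays_nat : \bigcup_k `]-oo, k%:R]%classic = [set: R].
Proof.
apply/seteqP; split => // x _; exists (Num.bound `|x|) => //=.
by rewrite in_itv /= ltW // (le_lt_trans (ler_norm x)) // archi_boundP.
Qed.

End left_rays.

Lemma fin_num_addM_eqE (R : realType) (a b c d e f : \bar R) :
  a \is a fin_num -> b \is a fin_num -> c \is a fin_num ->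
  d \is a fin_num -> e \is a fin_num -> f \is a fin_num ->
  (a + b = c * d + e * f)%E <-> fine a + fine b = fine c * fine d + fine e * fine f.
Proof.
move=> /fineK<- /fineK<- /fineK<- /fineK<- /fineK<- /fineK<- /=.
by rewrite -!EFinM -!EFinD; split => [[]|->].
Qed.

Lemma quasi_independentE d (T : measurableType d) (R : realType)
    (P : probability T R) (X Y : T -> R) :
  measurable_fun setT X -> measurable_fun setT Y ->
  quasi_independent P X Y <->
  forall x y, quasi_independent_on P X Y `]-oo, x]%classic `]-oo, y]%classic.
Proof.
move=> mX mY.
have mray (f : T -> R) x : measurable_fun setT f -> measurable (f @^-1` `]-oo, x]).
  by move=> mf; exact: measurable_fun_preimage.
have qiE x y : quasi_independent_on P X Y `]-oo, x] `]-oo, y] <->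
    joint_cdf P X Y x y + joint_cdf P X Y y x =
    marg_cdf P X x * marg_cdf P Y y + marg_cdf P X y * marg_cdf P Y x.
  by apply: fin_num_addM_eqE; apply: fin_num_measure; try apply: measurableI;
    exact: mray.
rewrite /quasi_independent; split => qi x y.
- by apply/qiE; move: (qi x y) => e; lra.
- by move/qiE: (qi x y) => e; lra.
Qed.

Theorem lemma1 (d : measure_display) (T : measurableType d) (R : realType)
  (P : probability T R) (X Y : T -> R)
  (mX : measurable_fun setT X) (mY : measurable_fun setT Y) :
  quasi_independent P X Y <->
  (forall A B : set R, measurable A -> measurable B ->
     (P (X @^-1` A `&` Y @^-1` B) + P (X @^-1` B `&` Y @^-1` A))%E
     = (P (X @^-1` A) * P (Y @^-1` B) + P (X @^-1` B) * P (Y @^-1` A))%E).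
Proof.
rewrite quasi_independentE //; split => [qi_rays | qi x y]; last exact: qi.
apply: (quasi_independent_on_generated mX mY
  (@measurable_left_rays R) (@left_rays_setI_closed R)
  (g := fun k => `]-oo, k%:R]%classic)).
- by move=> k; exists k%:R.
- exact: bigcup_left_rays_nat.
- by move=> _ _ [x _ <-] [y _ <-]; exact: qi_rays.
Qed.
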